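(* There exists a family of bijections $\sigma_{\ell_1,\ell_2}:D_{\ell_1,\ell_2}\to\{1,\dots,\ell_1+\ell_2\}$, indexed by all pairs of non-negative integers $(\ell_1,\ell_2)$, where $D_{\ell_1,\ell_2}=\{(i,j): i\in\{1,2\},\ 1\le j\le \ell_i\}$, and an absolute constant $C$, such that for all $\ell_1,\ell_2\ge 0$ with $L=\ell_1+\ell_2$: the number of elements of $D_{\ell_1,\ell_2}$ whose image under $\sigma_{\ell_1+1,\ell_2}$ differs from their image under $\sigma_{\ell_1,\ell_2}$ is at most $C\log(L+2)$, and likewise with $\sigma_{\ell_1,\ell_2+1}$ in place of $\sigma_{\ell_1+1,\ell_2}$.
   Context: Interpretation: $(i,j)$ denotes the $j$-th word of the $i$-th of two variable-length memories, and $\sigma_{\ell_1,\ell_2}(i,j)$ its position in a combined memory of $\ell_1+\ell_2$ words; the bijection depends only on the two sizes, and incrementing one size (an allocation) or decrementing it (a release, which is the reverse transition) should relocate few words. *)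

From mathcomp Require Import all_boot.
From Stdlib Require Import Reals.
Set Implicit Arguments. Unset Strict Implicit. Unset Printing Implicit Defensive.

(* D_{l1,l2} = {(i,j) : i in {1,2}, 1 <= j <= l_i}, encoded (0-based in j)
   as the disjoint sum 'I_l1 + 'I_l2: inl j = (1, j+1), inr j = (2, j+1). *)
Definition Dom (l1 l2 : nat) : finType := ('I_l1 + 'I_l2)%type.

Definition incl1 (l1 l2 : nat) (x : Dom l1 l2) : Dom l1.+1 l2 :=
  match x with
  | inl j => inl (widen_ord (leqnSn l1) j)
  | inr j => inr j
  end.

Definition incl2 (l1 l2 : nat) (x : Dom l1 l2) : Dom l1 l2.+1 :=
  match x with
  | inl j => inl j
  | inr j => inr (widen_ord (leqnSn l2) j)
  end.

(* Number of elements of D_{l1,l2} whose position (as a nat in 0..L-1,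
   i.e. the paper's position minus 1) changes between the two layouts. *)
Definition moved1 (sigma : forall l1 l2, Dom l1 l2 -> 'I_(l1 + l2)) (l1 l2 : nat) : nat :=
  #|[pred x : Dom l1 l2 | nat_of_ord (sigma l1.+1 l2 (incl1 x)) != nat_of_ord (sigma l1 l2 x)]|.

Definition moved2 (sigma : forall l1 l2, Dom l1 l2 -> 'I_(l1 + l2)) (l1 l2 : nat) : nat :=
  #|[pred x : Dom l1 l2 | nat_of_ord (sigma l1 l2.+1 (incl2 x)) != nat_of_ord (sigma l1 l2 x)]|.

(* Memory 1 is stored in order at addresses [0, l1); memory 2 occupies the block
   [l1, l1 + l2), where its even-indexed words fill the even addresses and its
   odd-indexed words the odd addresses, each half being laid out recursively in
   the same way.  Adding an address at one end of a block adds it to exactly one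
   of the two halves, so the other half keeps its layout and, up to the last
   words of the blocks, the moved words are those moved in a block of half the
   size; hence O(log L) words move.  Allocating in memory 1 shifts the block of
   memory 2 by one, which is compared with both layouts through the block
   [l1, l1 + l2] of one more word. *)

From mathcomp Require Import all_boot.
From Stdlib Require Import Reals Lra.
(* Re-imported so that [^] on [nat] means [expn] again rather than [Nat.pow]. *)
From mathcomp Require Import ssrnat zify.
Set Implicit Arguments. Unset Strict Implicit. Unset Printing Implicit Defensive.

Definition evens_below (a : nat) : nat := a.+1 %/ 2.
Definition odds_below (a : nat) : nat := a %/ 2.
Definition evens_in (a n : nat) : nat := evens_below (a + n) - evens_below a.
Definition odds_in (a n : nat) : nat := n - evens_in a n.

Definition goes_even (a n k : nat) : bool := ~~ odd k && (k %/ 2 < evens_in a n).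

(* [slot a n k] is the address of word [k] of a block occupying [a, a + n).
   An even-indexed word whose half-index exceeds the even half (only possible
   for the last word) goes to the odd half.  The fuel [n] only ensures
   termination. *)
Fixpoint slot_rec (fuel a n k : nat) : nat :=
  if fuel is fuel'.+1 then
    if n <= 1 then a
    else if goes_even a n k then 2 * slot_rec fuel' (evens_below a) (evens_in a n) (k %/ 2)
    else (2 * slot_rec fuel' (odds_below a) (odds_in a n) (k %/ 2)).+1
  else a.

Definition slot (a n k : nat) : nat := slot_rec n a n k.

Lemma evens_in_le a n : evens_in a n <= n.+1 %/ 2.
Proof. rewrite /evens_in /evens_below; lia. Qed.

Lemma odds_in_le a n : odds_in a n <= n.+1 %/ 2.
Proof. rewrite /odds_in /evens_in /evens_below; lia. Qed.

Lemma slot_rec_stable f f' a n k : n <= f -> n <= f' -> slot_rec f a n k = slot_rec f' a n k.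
Proof.
elim: f f' a n k => [|f IH] [|f'] a n k /= hf hf' //; try by have -> : n = 0 by lia.
case: ifP => // n_gt1.
have := evens_in_le a n; have := odds_in_le a n => hO hE.
by case: ifP => _; rewrite (IH f') //; lia.
Qed.

Lemma slot_recE f a n k : n <= f -> slot_rec f a n k = slot a n k.
Proof. by move=> n_le_f; apply: slot_rec_stable. Qed.

Lemma slot_le1 a n k : n <= 1 -> slot a n k = a.
Proof. by case: n => [|[|]]. Qed.

Lemma slotE a n k : k < n ->
  slot a n k = if goes_even a n k then 2 * slot (evens_below a) (evens_in a n) (k %/ 2)
               else (2 * slot (odds_below a) (odds_in a n) (k %/ 2)).+1.
Proof.
move=> k_lt_n; have := evens_in_le a n; have := odds_in_le a n => hO hE.
have [n_le1|n_gt1] := leqP n 1.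
  rewrite !slot_le1 /goes_even; try lia.
  have [-> ->] : n = 1 /\ k = 0 by lia.
  rewrite /evens_in /evens_below /odds_below; case: ifP; lia.
rewrite /slot; case: n k_lt_n n_gt1 hO hE => [|n] // _ n_gt1 hO hE /=.
by rewrite ifN -?ltnNge //; case: ifP => _; rewrite slot_recE //; lia.
Qed.

Lemma halves_lt a n : 1 < n -> evens_in a n < n /\ odds_in a n < n.
Proof. by move=> n_gt1; have := evens_in_le a n; have := odds_in_le a n; lia. Qed.

Lemma even_branch_lt a n k : goes_even a n k -> k %/ 2 < evens_in a n.
Proof. by case/andP. Qed.

Lemma odd_branch_lt a n k : k < n -> ~~ goes_even a n k -> k %/ 2 < odds_in a n.
Proof. rewrite /goes_even /odds_in /evens_in /evens_below; lia. Qed.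

Lemma slot_bounds n a k : k < n -> a <= slot a n k < a + n.
Proof.
elim/ltn_ind: n a k => n IH a k k_lt_n.
have [n_le1|/(halves_lt a)[e_lt o_lt]] := leqP n 1; first by rewrite slot_le1; lia.
rewrite slotE //; case: ifP => branch.
- have := IH _ e_lt (evens_below a) _ (even_branch_lt branch).
  rewrite /evens_in /evens_below; lia.
- have := IH _ o_lt (odds_below a) _ (odd_branch_lt k_lt_n (negbT branch)).
  rewrite /odds_in /evens_in /odds_below /evens_below; lia.
Qed.

Lemma odd_slot a n k : k < n -> odd (slot a n k) = ~~ goes_even a n k.
Proof. by move=> k_lt_n; rewrite slotE //; case: ifP => _; lia. Qed.

Lemma same_branch_half_inj a n k1 k2 : k1 < n -> k2 < n ->
  goes_even a n k1 = goes_even a n k2 -> k1 %/ 2 = k2 %/ 2 -> k1 = k2.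
Proof.
rewrite /goes_even /evens_in /evens_below.
by case: (boolP (odd k1)); case: (boolP (odd k2)) => /=; lia.
Qed.

Lemma slot_inj n a k1 k2 : k1 < n -> k2 < n -> slot a n k1 = slot a n k2 -> k1 = k2.
Proof.
elim/ltn_ind: n a k1 k2 => n IH a k1 k2 lt1 lt2 eq_slot.
have [n_le1|/(halves_lt a)[e_lt o_lt]] := leqP n 1; first lia.
have same : goes_even a n k1 = goes_even a n k2.
  by apply: negb_inj; rewrite -!odd_slot // eq_slot.
apply: (same_branch_half_inj lt1 lt2 same).
move: eq_slot; rewrite (slotE a lt1) (slotE a lt2) -same; case: ifP => branch eq_half.
- have branch2 : goes_even a n k2 by rewrite -same.
  apply: (IH _ e_lt (evens_below a)); last lia.
  + exact: even_branch_lt branch.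
  + exact: even_branch_lt branch2.
- have branch2 : ~~ goes_even a n k2 by rewrite -same branch.
  apply: (IH _ o_lt (odds_below a)); last lia.
  + exact: odd_branch_lt lt1 (negbT branch).
  + exact: odd_branch_lt lt2 branch2.
Qed.

Definition mismatch (a1 n1 a2 n2 m : nat) : nat :=
  count (fun k => slot a1 n1 k != slot a2 n2 k) (iota 0 m).

Lemma mismatch_le a1 n1 a2 n2 m : mismatch a1 n1 a2 n2 m <= m.
Proof. by rewrite -[leqRHS](size_iota 0) count_size. Qed.

Lemma mismatchxx a n m : mismatch a n a n m = 0.
Proof. by apply/eqP; rewrite -leqn0 -(count_pred0 (iota 0 m)) sub_count // => k /=; rewrite eqxx. Qed.

Lemma mismatch_triangle a1 n1 a2 n2 a3 n3 m :
  mismatch a1 n1 a3 n3 m <= mismatch a1 n1 a2 n2 m + mismatch a2 n2 a3 n3 m.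
Proof.
rewrite /mismatch -count_predUI; apply: leq_trans (leq_addr _ _).
by apply: sub_count => k /=; case: (slot a1 n1 k =P slot a2 n2 k) => [->|].
Qed.

Lemma slot_neq_cases a1 n1 a2 n2 k : k < n1 -> k < n2 -> slot a1 n1 k != slot a2 n2 k ->
  [\/ k = n1.-1, k = n2.-1,
      [/\ ~~ odd k, k %/ 2 < minn (evens_in a1 n1) (evens_in a2 n2)
        & slot (evens_below a1) (evens_in a1 n1) (k %/ 2)
            != slot (evens_below a2) (evens_in a2 n2) (k %/ 2)]
    | [/\ odd k, k %/ 2 < minn (odds_in a1 n1) (odds_in a2 n2)
        & slot (odds_below a1) (odds_in a1 n1) (k %/ 2)
            != slot (odds_below a2) (odds_in a2 n2) (k %/ 2)]].
Proof.
move=> lt1 lt2; rewrite (slotE a1 lt1) (slotE a2 lt2).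
have last_word n a : k < n -> ~~ odd k -> ~~ goes_even a n k -> k = n.-1.
  by rewrite /goes_even /evens_in /evens_below; lia.
case: ifP => b1; case: ifP => b2 ne.
- apply: Or43; split; first by case/andP: b1.
  + by rewrite leq_min !even_branch_lt.
  + by apply: contra ne => /eqP->.
- by apply: Or42; apply: (last_word n2 a2) => //; [case/andP: b1 | rewrite b2].
- by apply: Or41; apply: (last_word n1 a1) => //; [case/andP: b2 | rewrite b1].
- have [odd_k|even_k] := boolP (odd k).
  + apply: Or44; split => //; last by apply: contra ne => /eqP->.
    by rewrite leq_min !odd_branch_lt ?b1 ?b2.
  + by apply: Or41; apply: (last_word n1 a1) => //; rewrite b1.
Qed.

Lemma mismatch_halves a1 n1 a2 n2 :
  mismatch a1 n1 a2 n2 (minn n1 n2) <=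
  2 + mismatch (evens_below a1) (evens_in a1 n1) (evens_below a2) (evens_in a2 n2)
        (minn (evens_in a1 n1) (evens_in a2 n2))
    + mismatch (odds_below a1) (odds_in a1 n1) (odds_below a2) (odds_in a2 n2)
        (minn (odds_in a1 n1) (odds_in a2 n2)).
Proof.
rewrite /mismatch -!size_filter.
set ev := filter _ (iota 0 (minn (evens_in a1 n1) _)).
set od := filter _ (iota 0 (minn (odds_in a1 n1) _)).
have -> : 2 + size ev + size od =
    size (n1.-1 :: n2.-1 :: [seq 2 * i | i <- ev] ++ [seq (2 * i).+1 | i <- od]).
  by rewrite /= size_cat !size_map; lia.
apply: uniq_leq_size; first by rewrite filter_uniq ?iota_uniq.
move=> k; rewrite mem_filter mem_iota leq_min /= => /and3P[ne lt1 lt2].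
rewrite !inE mem_cat.
case: (slot_neq_cases lt1 lt2 ne) => [->|->|[even_k lt ne']|[odd_k lt ne']].
- by rewrite eqxx.
- by rewrite eqxx orbT.
- have -> : k \in [seq 2 * i | i <- ev].
    by apply/mapP; exists (k %/ 2); [rewrite mem_filter ne' mem_iota | lia].
  by rewrite !orbT.
- have -> : k \in [seq (2 * i).+1 | i <- od].
    by apply/mapP; exists (k %/ 2); [rewrite mem_filter ne' mem_iota | lia].
  by rewrite !orbT.
Qed.

Lemma halves_le_pow t a n : n <= 2 ^ t.+1 -> evens_in a n <= 2 ^ t /\ odds_in a n <= 2 ^ t.
Proof. by rewrite expnS; have := evens_in_le a n; have := odds_in_le a n; lia. Qed.

Lemma mismatch_grow t a n : n <= 2 ^ t -> mismatch a n.+1 a n n <= 2 * t + 1.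
Proof.
elim: t a n => [|t IH] a n n_le.
  by apply: leq_trans (mismatch_le _ _ _ _ _) _; rewrite expn0 in n_le; lia.
have [e_le o_le] := halves_le_pow a n_le.
have := mismatch_halves a n.+1 a n; rewrite (minn_idPr (leqnSn n)).
case: (boolP (odd (a + n))) => parity.
- have -> : evens_in a n.+1 = evens_in a n by rewrite /evens_in /evens_below; lia.
  have -> : odds_in a n.+1 = (odds_in a n).+1 by rewrite /odds_in /evens_in /evens_below; lia.
  rewrite mismatchxx (minn_idPr (leqnSn _)).
  by have := IH (odds_below a) _ o_le; lia.
- have -> : odds_in a n.+1 = odds_in a n by rewrite /odds_in /evens_in /evens_below; lia.
  have -> : evens_in a n.+1 = (evens_in a n).+1 by rewrite /evens_in /evens_below; lia.
  rewrite mismatchxx (minn_idPr (leqnSn _)).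
  by have := IH (evens_below a) _ e_le; lia.
Qed.

Lemma mismatch_shrink_front t a n : n <= 2 ^ t -> mismatch a.+1 n a n.+1 n <= 2 * t + 1.
Proof.
elim: t a n => [|t IH] a n n_le.
  by apply: leq_trans (mismatch_le _ _ _ _ _) _; rewrite expn0 in n_le; lia.
have [e_le o_le] := halves_le_pow a.+1 n_le.
have := mismatch_halves a.+1 n a n.+1; rewrite (minn_idPl (leqnSn n)).
case: (boolP (odd a)) => parity.
- have -> : evens_below a.+1 = evens_below a by rewrite /evens_below; lia.
  have -> : odds_below a.+1 = (odds_below a).+1 by rewrite /odds_below; lia.
  have -> : evens_in a.+1 n = evens_in a n.+1 by rewrite /evens_in /evens_below; lia.
  have -> : odds_in a n.+1 = (odds_in a.+1 n).+1 by rewrite /odds_in /evens_in /evens_below; lia.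
  rewrite mismatchxx (minn_idPl (leqnSn _)).
  by have := IH (odds_below a) _ o_le; lia.
- have -> : odds_below a.+1 = odds_below a by rewrite /odds_below; lia.
  have -> : evens_below a.+1 = (evens_below a).+1 by rewrite /evens_below; lia.
  have -> : odds_in a.+1 n = odds_in a n.+1 by rewrite /odds_in /evens_in /evens_below; lia.
  have -> : evens_in a n.+1 = (evens_in a.+1 n).+1 by rewrite /evens_in /evens_below; lia.
  rewrite mismatchxx (minn_idPl (leqnSn _)).
  by have := IH (evens_below a) _ e_le; lia.
Qed.

Lemma mismatch_shift t a n : n <= 2 ^ t -> mismatch a.+1 n a n n <= 4 * t + 2.
Proof.
move=> n_le; apply: leq_trans (mismatch_triangle _ _ a n.+1 _ _ _) _.
by have := mismatch_shrink_front a n_le; have := mismatch_grow a n_le; lia.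
Qed.

Lemma card_ord_count n (Q : pred nat) : #|[pred k : 'I_n | Q k]| = count Q (iota 0 n).
Proof. by rewrite cardE /enum_mem -enumT size_filter -val_enum_ord count_map. Qed.

Lemma card_inr_le (A : finType) n (P : pred (A + 'I_n)) (Q : pred nat) :
  (forall j, ~~ P (inl j)) -> (forall k : 'I_n, P (inr k) -> Q k) ->
  #|P| <= count Q (iota 0 n).
Proof.
move=> notPl PQ; rewrite -card_ord_count -(card_imset _ (@inr_inj A 'I_n)).
apply/subset_leq_card/subsetP => -[j|k] Px; first by rewrite unfold_in (negPf (notPl j)) in Px.
by apply: imset_f; exact: PQ.
Qed.

Lemma slot_ltn a n (k : 'I_n) : slot a n k < a + n.
Proof. by case/andP: (slot_bounds a (ltn_ord k)). Qed.

Definition layout (l1 l2 : nat) (x : Dom l1 l2) : 'I_(l1 + l2) :=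
  match x with
  | inl j => lshift l2 j
  | inr k => Ordinal (slot_ltn l1 k)
  end.

Lemma layout_inj l1 l2 : injective (@layout l1 l2).
Proof.
case=> [j1|k1] [j2|k2] /= /(congr1 val) /= eq_pos.
- by congr inl; apply: val_inj.
- by have := slot_bounds l1 (ltn_ord k2); have := ltn_ord j1; lia.
- by have := slot_bounds l1 (ltn_ord k1); have := ltn_ord j2; lia.
- by congr inr; apply/val_inj/(slot_inj (ltn_ord k1) (ltn_ord k2) eq_pos).
Qed.

Lemma layout_bij l1 l2 : bijective (@layout l1 l2).
Proof. by apply: inj_card_bij (@layout_inj l1 l2) _; rewrite card_sum !card_ord. Qed.

Lemma moved1_layout l1 l2 : moved1 layout l1 l2 <= mismatch l1.+1 l2 l1 l2 l2.
Proof. by apply: card_inr_le => [j|k] /=; rewrite ?eqxx. Qed.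

Lemma moved2_layout l1 l2 : moved2 layout l1 l2 <= mismatch l1 l2.+1 l1 l2 l2.
Proof. by apply: card_inr_le => [j|k] /=; rewrite ?eqxx. Qed.

Lemma INR_expn m k : INR (m ^ k) = pow (INR m) k.
Proof. by elim: k => //= k IH; rewrite expnS mult_INR IH. Qed.

Lemma ln_pow2_le k N : 2 ^ k <= N -> (INR k * ln 2 <= ln (INR N))%R.
Proof.
move=> /leP/le_INR; rewrite INR_expn -ln_pow; last lra.
case/Rle_lt_or_eq_dec => [pow_lt_N|<-]; last exact: Rle_refl.
by apply/Rlt_le/ln_increasing => //; apply: pow_lt; lra.
Qed.

Lemma le_log_bound m N : 1 < N -> m <= 4 * trunc_log 2 N + 6 ->
  (INR m <= 10 / ln 2 * ln (INR N))%R.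
Proof.
move=> N_gt1 m_le; set k := trunc_log 2 N.
have k_gt0 : 0 < k by rewrite trunc_log_gt0.
have ln2_gt0 : (0 < ln 2)%R by rewrite -ln_1; apply: ln_increasing; lra.
have k_ln : (INR k * ln 2 <= ln (INR N))%R by apply/ln_pow2_le/trunc_logP; lia.
have m_k : (INR m <= 10 * INR k)%R.
  have /leP/le_INR : m <= 10 * k by lia.
  by rewrite mult_INR /=; lra.
apply: (Rmult_le_reg_r (ln 2)) => //.
have -> : (10 / ln 2 * ln (INR N) * ln 2 = 10 * ln (INR N))%R by field; lra.
nra.
Qed.

Theorem lemma2p1 :
  exists (sigma : forall l1 l2 : nat, Dom l1 l2 -> 'I_(l1 + l2)) (C : R),
    (forall l1 l2 : nat, bijective (sigma l1 l2)) /\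
    (forall l1 l2 : nat,
        (INR (moved1 sigma l1 l2) <= C * ln (INR (l1 + l2 + 2)))%R /\
        (INR (moved2 sigma l1 l2) <= C * ln (INR (l1 + l2 + 2)))%R).
Proof.
exists layout, (10 / ln 2)%R; split; first exact: layout_bij.
move=> l1 l2; have N_gt1 : 1 < l1 + l2 + 2 by lia.
have l2_le : l2 <= 2 ^ (trunc_log 2 (l1 + l2 + 2)).+1.
  by have := trunc_log_ltn (l1 + l2 + 2) (ltnSn 1); lia.
split; apply: le_log_bound => //.
- apply: leq_trans (moved1_layout l1 l2) (leq_trans (mismatch_shift l1 l2_le) _); lia.
- apply: leq_trans (moved2_layout l1 l2) (leq_trans (mismatch_grow l1 l2_le) _); lia.
Qed.
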